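(* Let $f_j$, $j\in J=\{1,\dots,m\}$, be functions on $\mathbb{R}^n$, each strongly convex with constant $\mu_j>0$; let $D=\{x: f_j(x)\le 0,\ j\in J\}$ satisfy the Slater condition; let $f$ be a convex function attaining its minimum on $D$, such that no point of absolute minimum of $f$ on $\mathbb{R}^n$ (if one exists) lies in $\operatorname{int}D$. Let $x^*$ be the (unique) solution of $\min\{f(x):x\in D\}$, $f^*=f(x^* )$, $E^*=\{x\in\mathbb{R}^n: f(x)\le f^*\}$, $F(x)=\max_{j\in J}f_j(x)$, $\mu=\min_j\mu_j$, $D_\varepsilon=\{x:F(x)\le\varepsilon\}$. Let $\varepsilon>0$. Then every point $y\in D_\varepsilon\cap E^*$ with $y\ne x^*$ satisfies $\|y-x^*\|\le\sqrt{\varepsilon/\mu}$; if moreover $f$ satisfies a Lipschitz condition with constant $L$, then also $|f(y)-f^*|\le L\sqrt{\varepsilon/\mu}$.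
   Context: Each set $D_j=\{x:f_j(x)\le0\}$ is assumed to have nonempty interior. *)

From HB Require Import structures.
From mathcomp Require Import all_boot all_order all_algebra.
From mathcomp Require Import all_classical all_reals all_analysis.
Set Implicit Arguments. Unset Strict Implicit. Unset Printing Implicit Defensive.
Import Order.TTheory GRing.Theory Num.Theory.
Import numFieldNormedType.Exports.
Local Open Scope ring_scope.
Local Open Scope classical_set_scope.

Definition enorm (R : realType) (n : nat) (x : 'rV[R]_n) : R :=
  Num.sqrt (\sum_(i < n) x ord0 i ^+ 2).

Definition convex_fun (R : realType) (n : nat) (f : 'rV[R]_n -> R) : Prop :=
  forall (x y : 'rV[R]_n) (l : R), 0 <= l -> l <= 1 ->
    f (l *: x + (1 - l) *: y) <= l * f x + (1 - l) * f y.

(* strong convexity with constant mu (Polyak/Vasil'ev convention) *)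
Definition strongly_convex (R : realType) (n : nat) (mu : R)
  (f : 'rV[R]_n -> R) : Prop :=
  forall (x y : 'rV[R]_n) (l : R), 0 <= l -> l <= 1 ->
    f (l *: x + (1 - l) *: y)
      <= l * f x + (1 - l) * f y - mu * l * (1 - l) * enorm (x - y) ^+ 2.

Definition lipschitz_fun (R : realType) (n : nat) (L : R)
  (f : 'rV[R]_n -> R) : Prop :=
  forall x y : 'rV[R]_n, `|f x - f y| <= L * enorm (x - y).

Definition feas (R : realType) (n m : nat) (fs : 'I_m -> 'rV[R]_n -> R)
  : set 'rV[R]_n := [set x | forall j, fs j x <= 0].

Definition slater (R : realType) (n m : nat) (fs : 'I_m -> 'rV[R]_n -> R)
  : Prop := exists x : 'rV[R]_n, forall j, fs j x < 0.

Definition Fmax (R : realType) (n m : nat) (fs : 'I_m.+1 -> 'rV[R]_n -> R)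
  (x : 'rV[R]_n) : R := \big[Num.max/fs ord0 x]_(j < m.+1) fs j x.

Definition mumin (R : realType) (m : nat) (mus : 'I_m.+1 -> R) : R :=
  \big[Num.min/mus ord0]_(j < m.+1) mus j.

(* Suppose mu |y - x*|^2 > eps. Strong convexity of each f_j along the segment
   from x* to y gives f_j(z) <= l eps - mu l (1 - l) |y - x*|^2 < 0 at
   z = l y + (1 - l) x* for l > 0 small, while convexity of f and f(y) <= f*
   give f(z) <= f*. A convex function is bounded above near any point (on a
   small cube around z it is dominated by its values at the 2n points z +- e_i),
   so the strict inequalities f_j < 0 persist near z and z lies in int D.
   Then z minimizes f on D, a neighbourhood of z, so by convexity z minimizes
   f on all of R^n, contradicting the hypothesis on absolute minima. *)

From HB Require Import structures.
From mathcomp Require Import all_boot all_order all_algebra.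
From mathcomp Require Import all_classical all_reals all_analysis.
From mathcomp Require Import ring lra.
Import Order.TTheory GRing.Theory Num.Theory.
Import numFieldNormedType.Exports.
Local Open Scope ring_scope.
Local Open Scope classical_set_scope.

Lemma exists_slack_factor {R : realFieldType} {a b : R} :
  0 < a -> a < b -> exists2 l, 0 < l < 1 & a < b * (1 - l).
Proof.
move=> a_gt0 ab; have b_gt0 : 0 < b := lt_trans a_gt0 ab.
exists ((b - a) / (2 * b)).
  by rewrite divr_gt0 ?subr_gt0 ?mulr_gt0 //= ltr_pdivrMr ?mulr_gt0 //; lra.
have -> : b * (1 - (b - a) / (2 * b)) = (a + b) / 2 by field; rewrite gt_eqF.
lra.
Qed.

Lemma le_sqrt_of_mul_sqr_le {R : rcfType} {mu d e : R} :
  0 < mu -> 0 <= d -> mu * d ^+ 2 <= e -> d <= Num.sqrt (e / mu).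
Proof.
move=> mu_gt0 d_ge0 le_e; rewrite -(ger0_norm d_ge0) -sqrtr_sqr ler_sqrt.
  by rewrite ler_pdivlMr // mulrC.
apply: divr_ge0 (le_trans _ le_e) (ltW mu_gt0).
exact: mulr_ge0 (ltW mu_gt0) (sqr_ge0 d).
Qed.

Lemma ler_mxcoef_norm {R : realFieldType} {p q : nat} (A : 'M[R]_(p, q)) i j :
  `|A i j| <= `|A|.
Proof.
have -> : `|A| = mx_norm A by [].
by rewrite mx_normrE (le_bigmax _ (fun ij : 'I_p * 'I_q => `|A ij.1 ij.2|) (i, j)).
Qed.

Section Convexity.
Context {R : realType}.

Lemma enorm_gt0 {n : nat} (x : 'rV[R]_n) : x != 0 -> 0 < enorm x.
Proof.
move=> x_neq0; rewrite sqrtr_gt0 lt_def sumr_ge0 ?andbT => [|i _]; last exact: sqr_ge0.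
apply: contra x_neq0 => /eqP/psumr_eq0P x2_eq0; apply/eqP/rowP => i.
rewrite mxE; apply/eqP; rewrite -sqrf_eq0; apply/eqP.
by apply: x2_eq0 => // j _; exact: sqr_ge0.
Qed.

Lemma convex_segment {n : nat} {g : 'rV[R]_n -> R} z d t :
  convex_fun g -> 0 <= t -> t <= 1 ->
  g (z + t *: d) <= g z + t * (g (z + d) - g z).
Proof.
move=> cvx_g t_ge0 t_le1.
have <- : t *: (z + d) + (1 - t) *: z = z + t *: d.
  by rewrite scalerDr scalerBl scale1r addrC addrA subrK addrC.
apply: le_trans (cvx_g _ _ _ t_ge0 t_le1) _; lra.
Qed.

Lemma convex_axis_bound {n : nat} {g : 'rV[R]_n -> R} z d t :
  convex_fun g -> `|t| <= 1 ->
  g (z + t *: d) <= g z + `|t| * (`|g (z + d) - g z| + `|g (z - d) - g z|).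
Proof.
move=> cvx_g t_le1; have t_ge0 := normr_ge0 t.
have [t0|t0] := leP 0 t.
- rewrite -{1}(ger0_norm t0).
  apply: le_trans (convex_segment z d _ cvx_g t_ge0 t_le1) _.
  by rewrite lerD2l ler_wpM2l // (le_trans (ler_norm _)) // lerDl.
- have -> : t *: d = `|t| *: - d by rewrite ltr0_norm // scaleNr scalerN opprK.
  apply: le_trans (convex_segment z _ _ cvx_g t_ge0 t_le1) _.
  by rewrite lerD2l ler_wpM2l // (le_trans (ler_norm _)) // lerDr.
Qed.

Lemma convex_mean {n k : nat} {g : 'rV[R]_n -> R} (v : 'I_k.+1 -> 'rV[R]_n) :
  convex_fun g -> g (k.+1%:R^-1 *: \sum_i v i) <= k.+1%:R^-1 * \sum_i g (v i).
Proof.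
move=> cvx_g; elim: k v => [|k IH] v; first by rewrite !big_ord1 invr1 scale1r mul1r.
rewrite big_ord_recr [X in _ <= _ * X]big_ord_recr /=.
set S := \sum_(i < k.+1) _; set T := \sum_(i < k.+1) _.
have k1_gt0 : 0 < k.+1%:R :> R by rewrite ltr0n.
set l := k.+2%:R^-1 : R.
have l_ge0 : 0 <= l by rewrite invr_ge0.
have l_le1 : l <= 1 by rewrite invf_le1 // ler1n.
have lE : 1 - l = k.+1%:R * l by rewrite /l [k.+2%:R]mulrS; field; rewrite -mulrS.
have -> : l *: (S + v ord_max) = l *: v ord_max + (1 - l) *: (k.+1%:R^-1 *: S).
  by rewrite lE scalerA mulrAC mulfV ?gt_eqF // mul1r addrC scalerDr.
apply: le_trans (cvx_g _ _ _ l_ge0 l_le1) _.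
have IHk := IH (fun i => v (widen_ord (leqnSn _) i)).
apply: le_trans (lerD (lexx _) (ler_wpM2l _ IHk)) _; first by rewrite subr_ge0.
rewrite -/S -/T lE mulrAC mulrA mulfV ?gt_eqF // mul1r mulrDr; lra.
Qed.

Lemma convex_bounded_near {k : nat} {g : 'rV[R]_k.+1 -> R} z :
  convex_fun g -> exists2 K : R, 0 <= K &
    forall w, `|w - z| <= k.+1%:R^-1 -> g w <= g z + K * `|w - z|.
Proof.
move=> cvx_g; set N := k.+1%:R : R; have N_gt0 : 0 < N by rewrite ltr0n.
pose e i := delta_mx 0 i : 'rV[R]_k.+1.
pose c i := `|g (z + e i) - g z| + `|g (z - e i) - g z|.
have c_ge0 i : 0 <= c i by rewrite addr_ge0.
exists (\sum_i c i) => [|w hw]; first exact: sumr_ge0.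
(* w is the barycentre of the points v i, each on the segment [z - e i, z + e i]. *)
set h := w - z; pose v i := z + (N * h 0 i) *: e i.
have wE : w = N^-1 *: \sum_i v i.
  rewrite big_split /= sumr_const card_ord -scaler_nat.
  under eq_bigr do rewrite -scalerA.
  rewrite -scaler_sumr -row_sum_delta scalerDr !scalerA mulVf ?gt_eqF //.
  by rewrite !scale1r /h addrC subrK.
have v_le i : g (v i) <= g z + (N * `|h|) * c i.
  have hi : N * `|h 0 i| <= N * `|h| by rewrite ler_pM2l // ler_mxcoef_norm.
  have Nhi_le1 : `|N * h 0 i| <= 1.
    by rewrite normrM gtr0_norm // (le_trans hi) // -(mulfV (lt0r_neq0 N_gt0)) ler_pM2l.
  apply: le_trans (convex_axis_bound z (e i) _ cvx_g Nhi_le1) _.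
  by rewrite lerD2l ler_wpM2r // normrM gtr0_norm.
rewrite wE; apply: le_trans (convex_mean _ cvx_g) _.
apply: le_trans (ler_wpM2l _ (ler_sum _ (fun i _ => v_le i))) _.
  by rewrite invr_ge0 ltW.
rewrite big_split /= sumr_const card_ord -mulr_sumr -/N -mulr_natr.
by rewrite -/N mulrDr mulrAC (mulrC (g z)) -mulrA !mulKf ?lt0r_neq0.
Qed.

Lemma convex_lt0_near {n : nat} {g : 'rV[R]_n -> R} {z} :
  convex_fun g -> g z < 0 -> \forall w \near z, g w < 0.
Proof.
case: n g z => [|k] g z cvx_g gz_lt0.
  by near=> w; suff -> : w = z by []; apply/rowP => -[].
have [K K_ge0 g_le] := convex_bounded_near z cvx_g.
pose r := Num.min k.+1%:R^-1 (- g z / (K + 1)).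
have K1_gt0 : 0 < K + 1 by rewrite ltr_pwDr.
have r_gt0 : 0 < r by rewrite lt_min invr_gt0 ltr0n divr_gt0 ?oppr_gt0.
apply/nbhs_normP; exists r => //= w; rewrite /ball_ /= -normrN opprB => wz_lt.
have wz_ge0 := normr_ge0 (w - z).
have wz_small : (K + 1) * `|w - z| < - g z.
  rewrite mulrC -ltr_pdivlMr //; apply: (lt_le_trans wz_lt).
  by rewrite ge_min lexx orbT.
apply: le_lt_trans (g_le w _) _; last by nra.
by apply: ltW; apply: (lt_le_trans wz_lt); rewrite ge_min lexx.
Unshelve. all: end_near.
Qed.

Lemma strongly_convex_convex {n : nat} {mu : R} {g : 'rV[R]_n -> R} :
  0 <= mu -> strongly_convex mu g -> convex_fun g.
Proof.
move=> mu_ge0 sg x y l l_ge0 l_le1; apply: le_trans (sg x y l l_ge0 l_le1) _.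
by rewrite lerBlDr lerDl mulr_ge0 ?sqr_ge0 // !mulr_ge0 ?subr_ge0.
Qed.

Lemma strongly_convex_lt0_between {n : nat} {mu : R} {g : 'rV[R]_n -> R} {x y l} :
  strongly_convex mu g -> 0 < l -> l <= 1 -> g x <= 0 ->
  g y < mu * (1 - l) * enorm (y - x) ^+ 2 -> g (l *: y + (1 - l) *: x) < 0.
Proof.
move=> sg l_gt0 l_le1 gx_le0 gy_lt.
apply: le_lt_trans (sg y x l (ltW l_gt0) l_le1) _.
have : (1 - l) * g x <= 0 by rewrite mulr_ge0_le0 ?subr_ge0.
have : l * g y < l * (mu * (1 - l) * enorm (y - x) ^+ 2) by rewrite ltr_pM2l.
lra.
Qed.

Lemma convex_interior_minimizer {n : nat} {f : 'rV[R]_n -> R} {D : set 'rV[R]_n} {z} :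
  convex_fun f -> interior D z -> (forall x, D x -> f z <= f x) ->
  forall w, f z <= f w.
Proof.
move=> cvx_f /nbhs_normP[r /= r_gt0 ball_D] z_min w.
set a := `|w - z|; have a_ge0 : 0 <= a := normr_ge0 _.
have a1_gt0 : 0 < a + 1 by rewrite ltr_pwDr.
pose t := Num.min 1 (r / (a + 1)).
have t_gt0 : 0 < t by rewrite lt_min ltr01 divr_gt0.
have t_le1 : t <= 1 by rewrite ge_min lexx.
have ta_lt : t * a < r.
  apply: (@le_lt_trans _ _ (r / (a + 1) * a)).
    by rewrite ler_wpM2r // ge_min lexx orbT.
  by rewrite mulrAC ltr_pdivrMr // ltr_pM2l // ltrDl.
have : D (t *: w + (1 - t) *: z).
  apply: ball_D; rewrite /ball_ /= scalerBl scale1r addrCA opprD addrA subrr add0r.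
  by rewrite opprB -scalerBr normrZ gtr0_norm // distrC.
move=> /z_min fz_le; have := cvx_f w z t (ltW t_gt0) t_le1.
have : t * f z <= t * f w -> f z <= f w by rewrite ler_pM2l.
lra.
Qed.

Lemma feas_interior {n m : nat} {fs : 'I_m -> 'rV[R]_n -> R} {z} :
  (forall j, convex_fun (fs j)) -> (forall j, fs j z < 0) -> interior (feas fs) z.
Proof.
move=> cvx_fs fsz_lt0.
have : \forall w \near z, forall j, fs j w < 0.
  apply: (@filter_forall _ _ (fun j w => fs j w < 0) (nbhs z) _) => j.
  exact: convex_lt0_near (cvx_fs j) (fsz_lt0 j).
by apply: filterS => w fsw_lt0 j; exact: ltW.
Qed.

Lemma mumin_gt0 {m : nat} {mus : 'I_m.+1 -> R} :
  (forall j, 0 < mus j) -> 0 < mumin mus.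
Proof.
by move=> mus_gt0; apply: (big_ind (fun x => 0 < x)) => // a b; rewrite lt_min => -> ->.
Qed.

End Convexity.

Theorem lemma1p1p8 (R : realType) (n m : nat)
  (fs : 'I_m.+1 -> 'rV[R]_n -> R) (mus : 'I_m.+1 -> R)
  (f : 'rV[R]_n -> R) (xstar : 'rV[R]_n) (eps : R) :
  (forall j, 0 < mus j) ->
  (forall j, strongly_convex (mus j) (fs j)) ->
  slater fs ->
  convex_fun f ->
  (* no point of absolute minimum of f on R^n lies in int D *)
  (forall x : 'rV[R]_n, (forall z, f x <= f z) -> ~ interior (feas fs) x) ->
  (* x* is a (the) minimizer of f on D *)
  feas fs xstar ->
  (forall x, feas fs x -> f xstar <= f x) ->
  0 < eps ->
  forall y : 'rV[R]_n,
    Fmax fs y <= eps -> f y <= f xstar -> y <> xstar ->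
    enorm (y - xstar) <= Num.sqrt (eps / mumin mus) /\
    (forall L : R, lipschitz_fun L f ->
       `|f y - f xstar| <= L * Num.sqrt (eps / mumin mus)).
Proof.
move=> mus_gt0 sconv_fs _ cvx_f no_int_min xstar_feas xstar_min eps_gt0 y Fy_le fy_le y_neq.
set mu := mumin mus; set d := enorm (y - xstar).
have d_gt0 : 0 < d by apply: enorm_gt0; rewrite subr_eq0; apply/eqP.
have d_le : d <= Num.sqrt (eps / mu).
  apply: le_sqrt_of_mul_sqr_le (mumin_gt0 mus_gt0) (ltW d_gt0) _.
  rewrite leNgt; apply/negP => eps_lt.
  have [l /andP[l_gt0 l_lt1] eps_lt'] := exists_slack_factor eps_gt0 eps_lt.
  pose z := l *: y + (1 - l) *: xstar.
  have z_int : interior (feas fs) z.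
    apply: feas_interior => j.
      exact: strongly_convex_convex (ltW (mus_gt0 j)) (sconv_fs j).
    apply: strongly_convex_lt0_between (sconv_fs j) l_gt0 (ltW l_lt1) (xstar_feas j) _.
    apply: le_lt_trans (le_trans (le_bigmax _ _ j) Fy_le) (lt_le_trans eps_lt' _).
    rewrite mulrAC ler_wpM2r ?sqr_ge0 // ler_wpM2r ?subr_ge0 ?(ltW l_lt1) //.
    exact: bigmin_le.
  have fz_le : f z <= f xstar.
    apply: le_trans (cvx_f y xstar l (ltW l_gt0) (ltW l_lt1)) _.
    have : l * f y <= l * f xstar by rewrite ler_pM2l.
    lra.
  apply: (no_int_min z) (z_int); apply: convex_interior_minimizer z_int _ => // x.
  by move/xstar_min; exact: le_trans.
split=> // L lip_f; have lip_y := lip_f y xstar.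
have L_ge0 : 0 <= L by rewrite -(pmulr_lge0 _ d_gt0) (le_trans _ lip_y).
by apply: le_trans lip_y _; rewrite ler_wpM2l.
Qed.
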